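(* Let $V=\{(x_1,x_2,y_1,y_2)\in\mathbb{R}^4: X\neq0,\ Y\neq 0\}$. For every choice of polynomials $P_1,\dots,P_4\in\mathbb{Q}[x_1,x_2,y_1,y_2]$ and every variable $\xi\in\{x_1,x_2,y_1,y_2\}$ there exist polynomials $Q_1,\dots,Q_4\in\mathbb{Q}[x_1,x_2,y_1,y_2]$ such that $\frac{\partial}{\partial\xi}H_{Q_1,\dots,Q_4}=H_{P_1,\dots,P_4}$ on $V$.
   Context: For $(x_1,x_2,y_1,y_2)\in\mathbb{R}^4$ set $X=x_1-y_1$ and $Y=x_2-y_2$. For polynomials $P_1,\dots,P_4$ define on $V$ $$H_{P_1,\dots,P_4}=P_1\ln(X^2+Y^2)+P_2\arctan\!\Big(\frac XY\Big)+P_3\arctan\!\Big(\frac YX\Big)+P_4.$$ *)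

From mathcomp Require Import all_boot all_order all_algebra.
From mathcomp Require Import mpoly.
From mathcomp Require Import Rstruct.
From Stdlib Require Import Reals.

Set Implicit Arguments. Unset Strict Implicit. Unset Printing Implicit Defensive.

Definition pt := 'I_4 -> R.

Definition ix1 : 'I_4 := @Ordinal 4 0 isT.
Definition ix2 : 'I_4 := @Ordinal 4 1 isT.
Definition iy1 : 'I_4 := @Ordinal 4 2 isT.
Definition iy2 : 'I_4 := @Ordinal 4 3 isT.

Definition Xc (z : pt) : R := Rminus (z ix1) (z iy1).
Definition Yc (z : pt) : R := Rminus (z ix2) (z iy2).

Definition inV (z : pt) : Prop := Xc z <> R0 /\ Yc z <> R0.

Definition peval (p : {mpoly rat[4]}) (z : pt) : R :=
  (map_mpoly (ratr : rat -> R) p).@[z].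

Definition H (P1 P2 P3 P4 : {mpoly rat[4]}) (z : pt) : R :=
  Rplus (Rplus (Rplus
    (Rmult (peval P1 z) (ln (Rplus (Rsqr (Xc z)) (Rsqr (Yc z)))))
    (Rmult (peval P2 z) (atan (Rdiv (Xc z) (Yc z)))))
    (Rmult (peval P3 z) (atan (Rdiv (Yc z) (Xc z)))))
    (peval P4 z).

Definition upd (z : pt) (i : 'I_4) (t : R) : pt :=
  fun j => if j == i then t else z j.

Definition has_partial (f : pt -> R) (i : 'I_4) (z : pt) (l : R) : Prop :=
  derivable_pt_lim (fun t => f (upd z i t)) (z i) l.

From mathcomp Require Import all_boot all_order all_algebra.
From mathcomp Require Import mpoly.
From mathcomp Require Import Rstruct.
From Stdlib Require Import Reals Lra.
From Coquelicot Require Coquelicot.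
Import GRing.Theory Num.Theory.

(* Let xi' be the partner of xi (x1 <-> y1, x2 <-> y2), u = xi - xi' the
   coordinate difference involving xi, and v the other difference, which does
   not depend on xi.  On V both u and v are nonzero, X^2 + Y^2 = u^2 + v^2, and
   atan(X/Y), atan(Y/X) are, up to sign, atan(u/v) and atan(v/u).  Call g
   H-primitive if some H_{Q1,..,Q4} has xi-derivative g on V; such g form a
   rational vector space closed under multiplication by coordinates other
   than xi (the file first records evaluation of polynomials, the needed
   one-variable derivatives, and this closure).
   1. Differentiating u^n ln(u^2+v^2), u^n atan(u/v), u^n atan(v/u) and u^n
      shows that four explicit families of functions are H-primitive; besides
      the transcendental terms they contain the rational terms u^n/(u^2+v^2).
   2. By induction on n, v u^n/(u^2+v^2) and u^(n+1)/(u^2+v^2) are H-primitive.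
   3. Hence u^k F is H-primitive for every k and F among ln(u^2+v^2),
      atan(u/v), atan(v/u) and 1.
   4. As xi = u + xi', the multipliers g such that u^k g F is H-primitive for
      all k are closed under multiplication by every coordinate, so they
      contain all polynomials.
   The theorem follows by linearity from the four terms of H_{P1,..,P4}. *)

Section PolynomialEvaluation.
Local Open Scope ring_scope.
Implicit Types (p q : {mpoly rat[4]}) (w : pt).

Lemma peval_add p q w : peval (p + q) w = Rplus (peval p w) (peval q w).
Proof. by rewrite /peval rmorphD mevalD. Qed.

Lemma peval_mul p q w : peval (p * q) w = Rmult (peval p w) (peval q w).
Proof. by rewrite /peval rmorphM mevalM. Qed.

Lemma peval_scale c p w : peval (c *: p) w = Rmult (ratr c) (peval p w).
Proof. by rewrite /peval map_mpolyZ mevalZ. Qed.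

Lemma peval_opp p w : peval (- p) w = Ropp (peval p w).
Proof. by rewrite /peval rmorphN mevalN. Qed.

Lemma peval_0 w : peval 0 w = R0.
Proof. by rewrite /peval rmorph0 meval0. Qed.

Lemma peval_1 w : peval 1 w = R1.
Proof. by rewrite /peval rmorph1 meval1. Qed.

Lemma peval_X i w : peval 'X_i w = w i.
Proof. by rewrite /peval map_mpolyX mevalXU. Qed.

Lemma peval_exp p n w : peval (p ^+ n) w = pow (peval p w) n.
Proof. by rewrite /peval !rmorphXn RpowE. Qed.

Lemma ratr_opp1 : ratr (-1 : rat) = Ropp R1 :> R.
Proof. by rewrite rmorphN1. Qed.

End PolynomialEvaluation.

Open Scope R_scope.

Module ShiftedDerivatives.
Import Coquelicot.Coquelicot.

Lemma sum_squares_pos u v : v <> 0 -> 0 < u ^ 2 + v ^ 2.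
Proof. move=> hv; have := Rsqr_pos_lt v hv; have := pow2_ge_0 u; rewrite /Rsqr; nra. Qed.

Lemma derive_pow c n t0 :
  derivable_pt_lim (fun t => (t - c) ^ n) t0 (INR n * (t0 - c) ^ Nat.pred n).
Proof. apply is_derive_Reals; auto_derive => //; rewrite /Rminus; ring. Qed.

Lemma derive_pow_ln c v n t0 : v <> 0 ->
  derivable_pt_lim (fun t => (t - c) ^ n * ln ((t - c) ^ 2 + v ^ 2)) t0
    (INR n * (t0 - c) ^ Nat.pred n * ln ((t0 - c) ^ 2 + v ^ 2)
     + (t0 - c) ^ n * (2 * (t0 - c) / ((t0 - c) ^ 2 + v ^ 2))).
Proof.
move=> hv; have hD := sum_squares_pos (t0 - c) v hv.
have eD : (t0 + - c) * ((t0 + - c) * 1) + v * (v * 1) = (t0 - c) ^ 2 + v ^ 2 by ring.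
apply is_derive_Reals; auto_derive; rewrite eD; first by repeat split; lra.
rewrite -/(Rminus t0 c); field; lra.
Qed.

Lemma derive_pow_atan_uv c v n t0 : v <> 0 ->
  derivable_pt_lim (fun t => (t - c) ^ n * atan ((t - c) / v)) t0
    (INR n * (t0 - c) ^ Nat.pred n * atan ((t0 - c) / v)
     + (t0 - c) ^ n * (v / ((t0 - c) ^ 2 + v ^ 2))).
Proof.
move=> hv; have hD := sum_squares_pos (t0 - c) v hv.
apply is_derive_Reals; auto_derive => //; rewrite -/(Rminus t0 c).
have -> : 1 + (t0 - c) * / v * ((t0 - c) * / v * 1) = ((t0 - c) ^ 2 + v ^ 2) / v ^ 2
  by field.
rewrite /Rdiv; field; split => //; lra.
Qed.

Lemma derive_pow_atan_vu c v n t0 : v <> 0 -> t0 - c <> 0 ->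
  derivable_pt_lim (fun t => (t - c) ^ n * atan (v / (t - c))) t0
    (INR n * (t0 - c) ^ Nat.pred n * atan (v / (t0 - c))
     - (t0 - c) ^ n * (v / ((t0 - c) ^ 2 + v ^ 2))).
Proof.
move=> hv hu; have hD := sum_squares_pos (t0 - c) v hv.
apply is_derive_Reals; auto_derive; rewrite -/(Rminus t0 c) //.
have -> : 1 + v * / (t0 - c) * (v * / (t0 - c) * 1) = ((t0 - c) ^ 2 + v ^ 2) / (t0 - c) ^ 2
  by field.
rewrite /Rdiv; field; repeat split => //; lra.
Qed.

End ShiftedDerivatives.

Definition Hprimitive (xi : 'I_4) (g : pt -> R) : Prop :=
  exists Q1 Q2 Q3 Q4 : {mpoly rat[4]},
    forall z, inV z -> has_partial (H Q1 Q2 Q3 Q4) xi z (g z).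

Lemma upd_self z i t : upd z i t i = t.
Proof. by rewrite /upd eqxx. Qed.

Lemma upd_other z i t j : j != i -> upd z i t j = z j.
Proof. by move=> h; rewrite /upd (negbTE h). Qed.

Section HprimitiveLinear.
Local Open Scope ring_scope.
Context {xi : 'I_4}.

Lemma Hprimitive_ext {g g'} :
  Hprimitive xi g -> (forall z, inV z -> g z = g' z) -> Hprimitive xi g'.
Proof.
move=> [Q1 [Q2 [Q3 [Q4 hQ]]]] e; exists Q1, Q2, Q3, Q4 => z hz.
by rewrite -e //; apply: hQ.
Qed.

Lemma Hprimitive_zero : Hprimitive xi (fun _ => R0).
Proof.
exists 0, 0, 0, 0 => z _; rewrite /has_partial.
apply: (derivable_pt_lim_ext (fun _ => R0)); last exact: derivable_pt_lim_const.
by move=> t; rewrite /H !peval_0; ring.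
Qed.

Lemma Hprimitive_add {g1 g2} : Hprimitive xi g1 -> Hprimitive xi g2 ->
  Hprimitive xi (fun z => Rplus (g1 z) (g2 z)).
Proof.
move=> [Q1 [Q2 [Q3 [Q4 hQ]]]] [P1 [P2 [P3 [P4 hP]]]].
exists (Q1 + P1), (Q2 + P2), (Q3 + P3), (Q4 + P4) => z hz.
apply: derivable_pt_lim_ext (derivable_pt_lim_plus _ _ _ _ _ (hQ z hz) (hP z hz)).
by move=> t; rewrite /plus_fct /H !peval_add; ring.
Qed.

Lemma Hprimitive_scale c {g} :
  Hprimitive xi g -> Hprimitive xi (fun z => Rmult (ratr c) (g z)).
Proof.
move=> [Q1 [Q2 [Q3 [Q4 hQ]]]].
exists (c *: Q1), (c *: Q2), (c *: Q3), (c *: Q4) => z hz.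
apply: derivable_pt_lim_ext (derivable_pt_lim_scal _ (ratr c) _ _ (hQ z hz)).
by move=> t; rewrite /mult_real_fct /H !peval_scale; ring.
Qed.

(* A coordinate other than xi is a constant for the xi-derivative. *)
Lemma Hprimitive_mulX {j g} : j != xi ->
  Hprimitive xi g -> Hprimitive xi (fun z => Rmult (z j) (g z)).
Proof.
move=> hj [Q1 [Q2 [Q3 [Q4 hQ]]]].
exists ('X_j * Q1), ('X_j * Q2), ('X_j * Q3), ('X_j * Q4) => z hz.
apply: derivable_pt_lim_ext (derivable_pt_lim_scal _ (z j) _ _ (hQ z hz)).
by move=> t; rewrite /mult_real_fct /H !peval_mul !peval_X upd_other //; ring.
Qed.

Lemma Hprimitive_opp {g} : Hprimitive xi g -> Hprimitive xi (fun z => Ropp (g z)).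
Proof.
move=> h; apply: Hprimitive_ext (Hprimitive_scale (-1) h) _ => z _.
rewrite ratr_opp1; ring.
Qed.

Lemma Hprimitive_sub {g1 g2} : Hprimitive xi g1 -> Hprimitive xi g2 ->
  Hprimitive xi (fun z => Rminus (g1 z) (g2 z)).
Proof. by move=> h1 h2; apply: Hprimitive_add h1 (Hprimitive_opp h2). Qed.

Lemma Hprimitive_nat n {g} :
  Hprimitive xi g -> Hprimitive xi (fun z => Rmult (INR n) (g z)).
Proof.
move=> h; apply: Hprimitive_ext (Hprimitive_scale n%:R h) _ => z _.
by rewrite rmorph_nat INRE.
Qed.

Lemma Hprimitive_div_succ n {g} :
  Hprimitive xi g -> Hprimitive xi (fun z => Rmult (Rinv (INR n.+1)) (g z)).
Proof.
move=> h; apply: Hprimitive_ext (Hprimitive_scale (n.+1%:R^-1) h) _ => z _.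
by rewrite fmorphV rmorph_nat INRE.
Qed.

End HprimitiveLinear.

Definition partner (xi : 'I_4) : 'I_4 :=
  if xi == ix1 then iy1 else if xi == ix2 then iy2 else if xi == iy1 then ix1 else ix2.

Definition udiff (xi : 'I_4) (w : pt) : R := w xi - w (partner xi).

Definition vdiff (xi : 'I_4) (w : pt) : R :=
  if (xi == ix1) || (xi == iy1) then Yc w else Xc w.

Lemma ord4_cases (xi : 'I_4) : xi = ix1 \/ xi = ix2 \/ xi = iy1 \/ xi = iy2.
Proof.
case: xi => [[|[|[|[|m]]]] hm] //.
- by left; apply: val_inj.
- by right; left; apply: val_inj.
- by right; right; left; apply: val_inj.
- by right; right; right; apply: val_inj.
Qed.

Lemma partner_neq xi : partner xi != xi.
Proof. by case: (ord4_cases xi) => [->|[->|[->|->]]]. Qed.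

Lemma vdiff_coords xi :
  exists a b : 'I_4, [/\ a != xi, b != xi & forall w, vdiff xi w = w a - w b].
Proof.
rewrite /vdiff /Xc /Yc.
by case: (ord4_cases xi) => [->|[->|[->|->]]] /=; [exists ix2, iy2|exists ix1, iy1
  |exists ix2, iy2|exists ix1, iy1].
Qed.

Lemma udiff_upd xi z t : udiff xi (upd z xi t) = t - z (partner xi).
Proof. by rewrite /udiff upd_self upd_other // partner_neq. Qed.

Lemma vdiff_upd xi z t : vdiff xi (upd z xi t) = vdiff xi z.
Proof. by case: (ord4_cases xi) => [->|[->|[->|->]]]. Qed.

Lemma udiff_vdiff_neq0 xi z : inV z -> udiff xi z <> 0 /\ vdiff xi z <> 0.
Proof.
rewrite /inV /udiff /vdiff /Xc /Yc.
by case: (ord4_cases xi) => [->|[->|[->|->]]] /= [hX hY]; split => //;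
  rewrite /partner /= => h; [apply: hX|apply: hY]; lra.
Qed.

Lemma sum_squares_uv xi w : Rsqr (Xc w) + Rsqr (Yc w) = udiff xi w ^ 2 + vdiff xi w ^ 2.
Proof.
rewrite /udiff /vdiff /Xc /Yc /Rsqr.
by case: (ord4_cases xi) => [->|[->|[->|->]]]; rewrite /partner /=; ring.
Qed.

Lemma sum_squares_uv_neq0 xi z : inV z -> udiff xi z ^ 2 + vdiff xi z ^ 2 <> 0.
Proof.
move=> hz; have [_ hv] := udiff_vdiff_neq0 xi z hz.
have := ShiftedDerivatives.sum_squares_pos (udiff xi z) _ hv; lra.
Qed.

(* Oddness of atan, used when xi is y1 or y2 (then u = -X or u = -Y). *)
Lemma atan_opp_num a b : atan (- a / b) = - atan (a / b).
Proof. by rewrite -atan_opp /Rdiv Ropp_mult_distr_l. Qed.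

Lemma atan_opp_den a b : atan (a / - b) = - atan (a / b).
Proof. by rewrite -atan_opp /Rdiv Rinv_opp Ropp_mult_distr_r. Qed.

Definition Hform (f : pt -> R) : Prop :=
  exists Q1 Q2 Q3 Q4 : {mpoly rat[4]}, forall w, H Q1 Q2 Q3 Q4 w = f w.

Lemma Hprimitive_of_Hform xi f g : Hform f ->
  (forall z, inV z -> derivable_pt_lim (fun t => f (upd z xi t)) (z xi) (g z)) ->
  Hprimitive xi g.
Proof.
move=> [Q1 [Q2 [Q3 [Q4 hQ]]]] hf; exists Q1, Q2, Q3, Q4 => z hz.
by apply: derivable_pt_lim_ext (hf z hz) => t; rewrite hQ.
Qed.

Section Hforms.
Local Open Scope ring_scope.
Variables (xi : 'I_4) (p : {mpoly rat[4]}).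

Lemma Hform_poly : Hform (peval p).
Proof. by exists 0, 0, 0, p => w; rewrite /H !peval_0; ring. Qed.

Lemma Hform_ln :
  Hform (fun w => Rmult (peval p w) (ln (Rplus (Rsqr (Xc w)) (Rsqr (Yc w))))).
Proof. by exists p, 0, 0, 0 => w; rewrite /H !peval_0; ring. Qed.

Lemma Hform_atan_uv :
  Hform (fun w => Rmult (peval p w) (atan (Rdiv (udiff xi w) (vdiff xi w)))).
Proof.
case: (ord4_cases xi) => [->|[->|[->|->]]].
- by exists 0, p, 0, 0 => w; rewrite /H !peval_0 /udiff /vdiff /partner /Xc /Yc /=; ring.
- by exists 0, 0, p, 0 => w; rewrite /H !peval_0 /udiff /vdiff /partner /Xc /Yc /=; ring.
- exists 0, (- p), 0, 0 => w; rewrite /H !peval_0 peval_opp /udiff /vdiff /partner /Xc /Yc /=.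
  by rewrite -(Ropp_minus_distr (w ix1)) atan_opp_num; ring.
- exists 0, 0, (- p), 0 => w; rewrite /H !peval_0 peval_opp /udiff /vdiff /partner /Xc /Yc /=.
  by rewrite -(Ropp_minus_distr (w ix2)) atan_opp_num; ring.
Qed.

Lemma Hform_atan_vu :
  Hform (fun w => Rmult (peval p w) (atan (Rdiv (vdiff xi w) (udiff xi w)))).
Proof.
case: (ord4_cases xi) => [->|[->|[->|->]]].
- by exists 0, 0, p, 0 => w; rewrite /H !peval_0 /udiff /vdiff /partner /Xc /Yc /=; ring.
- by exists 0, p, 0, 0 => w; rewrite /H !peval_0 /udiff /vdiff /partner /Xc /Yc /=; ring.
- exists 0, 0, (- p), 0 => w; rewrite /H !peval_0 peval_opp /udiff /vdiff /partner /Xc /Yc /=.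
  by rewrite -(Ropp_minus_distr (w ix1)) atan_opp_den; ring.
- exists 0, (- p), 0, 0 => w; rewrite /H !peval_0 peval_opp /udiff /vdiff /partner /Xc /Yc /=.
  by rewrite -(Ropp_minus_distr (w ix2)) atan_opp_den; ring.
Qed.

Definition upoly_pow (n : nat) : {mpoly rat[4]} := ('X_xi - 'X_(partner xi)) ^+ n.

Lemma peval_upoly_pow n z t :
  peval (upoly_pow n) (upd z xi t) = pow (Rminus t (z (partner xi))) n.
Proof.
rewrite peval_exp /peval rmorphB mevalB -!/(peval _ _) !peval_X.
by rewrite upd_self upd_other // partner_neq.
Qed.

End Hforms.

Section ElementaryPrimitives.
Variable xi : 'I_4.
Local Notation u := (udiff xi).
Local Notation v := (vdiff xi).

Lemma Hprimitive_d_ln n : Hprimitive xi (fun z =>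
  INR n * u z ^ Nat.pred n * ln (u z ^ 2 + v z ^ 2)
  + u z ^ n * (2 * u z / (u z ^ 2 + v z ^ 2))).
Proof.
apply: Hprimitive_of_Hform (Hform_ln (upoly_pow xi n)) _ => z hz.
have [_ hv] := udiff_vdiff_neq0 xi z hz.
apply: derivable_pt_lim_ext (ShiftedDerivatives.derive_pow_ln (z (partner xi)) _ n (z xi) hv).
by move=> t; rewrite peval_upoly_pow (sum_squares_uv xi) udiff_upd vdiff_upd.
Qed.

Lemma Hprimitive_d_atan_uv n : Hprimitive xi (fun z =>
  INR n * u z ^ Nat.pred n * atan (u z / v z)
  + u z ^ n * (v z / (u z ^ 2 + v z ^ 2))).
Proof.
apply: Hprimitive_of_Hform (Hform_atan_uv xi (upoly_pow xi n)) _ => z hz.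
have [_ hv] := udiff_vdiff_neq0 xi z hz.
apply: derivable_pt_lim_ext
  (ShiftedDerivatives.derive_pow_atan_uv (z (partner xi)) _ n (z xi) hv).
by move=> t; rewrite peval_upoly_pow udiff_upd vdiff_upd.
Qed.

Lemma Hprimitive_d_atan_vu n : Hprimitive xi (fun z =>
  INR n * u z ^ Nat.pred n * atan (v z / u z)
  - u z ^ n * (v z / (u z ^ 2 + v z ^ 2))).
Proof.
apply: Hprimitive_of_Hform (Hform_atan_vu xi (upoly_pow xi n)) _ => z hz.
have [hu hv] := udiff_vdiff_neq0 xi z hz.
apply: derivable_pt_lim_ext
  (ShiftedDerivatives.derive_pow_atan_vu (z (partner xi)) _ n (z xi) hv hu).
by move=> t; rewrite peval_upoly_pow udiff_upd vdiff_upd.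
Qed.

Lemma Hprimitive_d_pow n : Hprimitive xi (fun z => INR n * u z ^ Nat.pred n).
Proof.
apply: Hprimitive_of_Hform (Hform_poly (upoly_pow xi n)) _ => z _.
apply: derivable_pt_lim_ext (ShiftedDerivatives.derive_pow (z (partner xi)) n (z xi)).
by move=> t; rewrite peval_upoly_pow.
Qed.

Lemma Hprimitive_mulv {g} : Hprimitive xi g -> Hprimitive xi (fun z => v z * g z).
Proof.
move=> h; have [a [b [ha hb ev]]] := vdiff_coords xi.
apply: Hprimitive_ext (Hprimitive_sub (Hprimitive_mulX ha h) (Hprimitive_mulX hb h)) _.
by move=> z _; rewrite ev; ring.
Qed.

(* Step 2: the rational terms v u^n/(u^2+v^2) and u^(n+1)/(u^2+v^2).  The
   second one reduces to the first through u^(n+2) = u^n (u^2+v^2) - v^2 u^n. *)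
Lemma Hprimitive_rational n :
  Hprimitive xi (fun z => v z * (u z ^ n / (u z ^ 2 + v z ^ 2)))
  /\ Hprimitive xi (fun z => u z ^ n.+1 / (u z ^ 2 + v z ^ 2)).
Proof.
elim: n => [|n [IHv IHu]].
  split.
  - apply: Hprimitive_ext (Hprimitive_d_atan_uv 0) _ => z hz.
    have hD := sum_squares_uv_neq0 xi z hz.
    by rewrite [INR 0]/= !pow_O; field.
  - apply: Hprimitive_ext (Hprimitive_div_succ 1 (Hprimitive_d_ln 0)) _ => z hz.
    have hD := sum_squares_uv_neq0 xi z hz.
    by rewrite [INR 0]/= [INR 2]/= !pow_O pow_1; field.
split; first exact: Hprimitive_mulv IHu.
apply: Hprimitive_ext (Hprimitive_sub (Hprimitive_div_succ n (Hprimitive_d_pow n.+1))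
  (Hprimitive_mulv IHv)) _ => z hz.
have hD := sum_squares_uv_neq0 xi z hz; have hn := not_0_INR n.+1 (Nat.neq_succ_0 n).
rewrite [Nat.pred _]/= [u z ^ n.+2]/=; field; split => //.
Qed.

(* Step 3: u^k F is H-primitive for F = ln(u^2+v^2), atan(u/v), atan(v/u), 1,
   solving the step-1 derivatives of index k+1 for their leading term. *)
Lemma Hprimitive_upow_ln k : Hprimitive xi (fun z => u z ^ k * ln (u z ^ 2 + v z ^ 2)).
Proof.
apply: Hprimitive_ext (Hprimitive_div_succ k (Hprimitive_sub (Hprimitive_d_ln k.+1)
  (Hprimitive_nat 2 (Hprimitive_rational k.+1).2))) _ => z hz.
have hD := sum_squares_uv_neq0 xi z hz; have hn := not_0_INR k.+1 (Nat.neq_succ_0 k).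
rewrite [Nat.pred _]/= [u z ^ k.+2]/= [u z ^ k.+1]/= [INR 2]/=; field; split => //.
Qed.

Lemma Hprimitive_upow_atan_uv k : Hprimitive xi (fun z => u z ^ k * atan (u z / v z)).
Proof.
apply: Hprimitive_ext (Hprimitive_div_succ k (Hprimitive_sub (Hprimitive_d_atan_uv k.+1)
  (Hprimitive_rational k.+1).1)) _ => z hz.
have hD := sum_squares_uv_neq0 xi z hz; have hn := not_0_INR k.+1 (Nat.neq_succ_0 k).
rewrite [Nat.pred _]/= [u z ^ k.+1]/=; field; split => //.
Qed.

Lemma Hprimitive_upow_atan_vu k : Hprimitive xi (fun z => u z ^ k * atan (v z / u z)).
Proof.
apply: Hprimitive_ext (Hprimitive_div_succ k (Hprimitive_add (Hprimitive_d_atan_vu k.+1)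
  (Hprimitive_rational k.+1).1)) _ => z hz.
have hD := sum_squares_uv_neq0 xi z hz; have hn := not_0_INR k.+1 (Nat.neq_succ_0 k).
rewrite [Nat.pred _]/= [u z ^ k.+1]/=; field; split => //.
Qed.

Lemma Hprimitive_upow k : Hprimitive xi (fun z => u z ^ k).
Proof.
apply: Hprimitive_ext (Hprimitive_div_succ k (Hprimitive_d_pow k.+1)) _ => z _.
rewrite [Nat.pred _]/=; field; exact: not_0_INR.
Qed.

End ElementaryPrimitives.

Definition upow_Hprimitive (xi : 'I_4) (F : pt -> R) : Prop :=
  forall k, Hprimitive xi (fun z => udiff xi z ^ k * F z).

Section PolynomialMultipliers.
Context {xi : 'I_4}.

Lemma upow_Hprimitive_ext {F G} :
  upow_Hprimitive xi F -> (forall z, F z = G z) -> upow_Hprimitive xi G.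
Proof. by move=> hF e k; apply: Hprimitive_ext (hF k) _ => z _; rewrite e. Qed.

Lemma upow_Hprimitive_opp {F} :
  upow_Hprimitive xi F -> upow_Hprimitive xi (fun z => - F z).
Proof. by move=> hF k; apply: Hprimitive_ext (Hprimitive_opp (hF k)) _ => z _; ring. Qed.

(* Multiplying by xi = u + partner xi raises the power of u; any other
   coordinate is a constant for the xi-derivative. *)
Lemma upow_Hprimitive_coord j {F} :
  upow_Hprimitive xi F -> upow_Hprimitive xi (fun z => z j * F z).
Proof.
move=> hF k; case: (eqVneq j xi) => [->|hj].
  apply: Hprimitive_ext (Hprimitive_add (hF k.+1)
    (Hprimitive_mulX (partner_neq xi) (hF k))) _ => z _.
  by rewrite /udiff /=; ring.
by apply: Hprimitive_ext (Hprimitive_mulX hj (hF k)) _ => z _; ring.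
Qed.

Lemma upow_Hprimitive_monomial m {F} :
  upow_Hprimitive xi F -> upow_Hprimitive xi (fun z => peval 'X_[m] z * F z).
Proof.
move=> hF; rewrite mpolyXE_id.
apply: (big_rec (fun q => upow_Hprimitive xi (fun z => peval q z * F z))) => [|i q _ hq].
  by apply: upow_Hprimitive_ext hF _ => z; rewrite peval_1; ring.
elim: (m i) => [|n IH].
  by apply: upow_Hprimitive_ext hq _ => z; rewrite peval_mul peval_exp /=; ring.
apply: upow_Hprimitive_ext (upow_Hprimitive_coord i IH) _ => z.
by rewrite !peval_mul !peval_exp peval_X /=; ring.
Qed.

Lemma Hprimitive_poly_mul {F} p :
  upow_Hprimitive xi F -> Hprimitive xi (fun z => peval p z * F z).
Proof.
move=> hF; elim/mpolyind: p => [|c m p _ _ IH].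
  by apply: Hprimitive_ext Hprimitive_zero _ => z _; rewrite peval_0; ring.
apply: Hprimitive_ext (Hprimitive_add
  (Hprimitive_scale c (upow_Hprimitive_monomial m hF 0%nat)) IH) _ => z _.
by rewrite peval_add peval_scale /=; ring.
Qed.

End PolynomialMultipliers.

(* The factors of H_{P1,..,P4}: each of ln(X^2+Y^2), atan(X/Y), atan(Y/X) and 1
   is, up to sign, one of the functions of step 3. *)
Section Factors.
Variable xi : 'I_4.

Lemma upow_Hprimitive_ln : upow_Hprimitive xi (fun w => ln (Rsqr (Xc w) + Rsqr (Yc w))).
Proof.
by apply: upow_Hprimitive_ext (Hprimitive_upow_ln xi) _ => w; rewrite (sum_squares_uv xi).
Qed.

Lemma upow_Hprimitive_one : upow_Hprimitive xi (fun _ => 1).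
Proof. by move=> k; apply: Hprimitive_ext (Hprimitive_upow xi k) _ => z _; ring. Qed.

Lemma upow_Hprimitive_atan_XY : upow_Hprimitive xi (fun w => atan (Xc w / Yc w)).
Proof.
case: (ord4_cases xi) => [->|[->|[->|->]]].
- by apply: upow_Hprimitive_ext (Hprimitive_upow_atan_uv ix1) _ => w;
    rewrite /udiff /vdiff /partner /=.
- by apply: upow_Hprimitive_ext (Hprimitive_upow_atan_vu ix2) _ => w;
    rewrite /udiff /vdiff /partner /=.
- apply: upow_Hprimitive_ext (upow_Hprimitive_opp (Hprimitive_upow_atan_uv iy1)) _ => w.
  by rewrite /udiff /vdiff /partner /Xc /= -(Ropp_minus_distr (w ix1)) atan_opp_num Ropp_involutive.
- apply: upow_Hprimitive_ext (upow_Hprimitive_opp (Hprimitive_upow_atan_vu iy2)) _ => w.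
  by rewrite /udiff /vdiff /partner /Yc /= -(Ropp_minus_distr (w ix2)) atan_opp_den Ropp_involutive.
Qed.

Lemma upow_Hprimitive_atan_YX : upow_Hprimitive xi (fun w => atan (Yc w / Xc w)).
Proof.
case: (ord4_cases xi) => [->|[->|[->|->]]].
- by apply: upow_Hprimitive_ext (Hprimitive_upow_atan_vu ix1) _ => w;
    rewrite /udiff /vdiff /partner /=.
- by apply: upow_Hprimitive_ext (Hprimitive_upow_atan_uv ix2) _ => w;
    rewrite /udiff /vdiff /partner /=.
- apply: upow_Hprimitive_ext (upow_Hprimitive_opp (Hprimitive_upow_atan_vu iy1)) _ => w.
  by rewrite /udiff /vdiff /partner /Xc /= -(Ropp_minus_distr (w ix1)) atan_opp_den Ropp_involutive.
- apply: upow_Hprimitive_ext (upow_Hprimitive_opp (Hprimitive_upow_atan_uv iy2)) _ => w.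
  by rewrite /udiff /vdiff /partner /Yc /= -(Ropp_minus_distr (w ix2)) atan_opp_num Ropp_involutive.
Qed.

End Factors.

Theorem mainTheorem7 :
  forall (P1 P2 P3 P4 : {mpoly rat[4]}) (xi : 'I_4),
  exists Q1 Q2 Q3 Q4 : {mpoly rat[4]},
    forall z : pt, inV z ->
      has_partial (H Q1 Q2 Q3 Q4) xi z (H P1 P2 P3 P4 z).
Proof.
move=> P1 P2 P3 P4 xi.
have hln := Hprimitive_poly_mul P1 (upow_Hprimitive_ln xi).
have hXY := Hprimitive_poly_mul P2 (upow_Hprimitive_atan_XY xi).
have hYX := Hprimitive_poly_mul P3 (upow_Hprimitive_atan_YX xi).
have hpoly := Hprimitive_poly_mul P4 (upow_Hprimitive_one xi).
have hH : Hprimitive xi (H P1 P2 P3 P4).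
  apply: Hprimitive_ext (Hprimitive_add (Hprimitive_add (Hprimitive_add hln hXY) hYX) hpoly) _.
  by move=> z _; rewrite /H; ring.
exact: hH.
Qed.
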